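(* Let $k\in\{0,1,-1\}$ and let $a_1,a_2$ be real constants. Consider the system of ordinary differential equations for real functions $\hat H(t)=(H_1,H_2,H_3)^T$, $\hat h(t)=(h_1,h_2,h_3)^T$: $$\frac{d\hat H}{dt}=\hat H\times\hat\Omega+\hat h\times\hat a,\qquad \frac{d\hat h}{dt}=\hat h\times\hat\Omega+k\,(\hat H\times\hat a),$$ where $\times$ is the vector product in $\mathbb{R}^3$, $\hat a=(a_1,a_2,0)^T$ and $\hat\Omega=(H_1/2,\,H_2/2,\,H_3)^T$ (i.e. $c_1=c_2=2$, $c_3=1$, $a_3=0$). Put $z=\tfrac12(H_1+iH_2)$, $w=h_1+ih_2$, $a=a_1+ia_2$. Then along every solution the function $|z^2-a(w-ka)|^2$ is constant.
   Context: This is the Hamiltonian system on the Lie algebra of $E_3$ ($k=0$), $\mathfrak{so}_4$ ($k=1$) or $\mathfrak{so}(1,3)$ ($k=-1$) generated by $H=\frac12\big(\frac{H_1^2}{c_1}+\frac{H_2^2}{c_2}+\frac{H_3^2}{c_3}\big)+a_1h_1+a_2h_2+a_3h_3$ with $c_1=c_2=2c_3$, $a_3=0$, normalized so that $c_3=1$. *)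

From Stdlib Require Import Reals.
From Coquelicot Require Export Coquelicot.
Open Scope R_scope.

Record V3 := mkV3 { x1 : R; x2 : R; x3 : R }.

Definition vadd (u v : V3) : V3 := mkV3 (x1 u + x1 v) (x2 u + x2 v) (x3 u + x3 v).
Definition vscale (c : R) (u : V3) : V3 := mkV3 (c * x1 u) (c * x2 u) (c * x3 u).

Definition cross (u v : V3) : V3 :=
  mkV3 (x2 u * x3 v - x3 u * x2 v)
       (x3 u * x1 v - x1 u * x3 v)
       (x1 u * x2 v - x2 u * x1 v).

Definition is_derive_V3 (f : R -> V3) (t : R) (v : V3) : Prop :=
  is_derive (fun s => x1 (f s)) t (x1 v) /\
  is_derive (fun s => x2 (f s)) t (x2 v) /\
  is_derive (fun s => x3 (f s)) t (x3 v).

Definition Omega (H : V3) : V3 := mkV3 (x1 H / 2) (x2 H / 2) (x3 H).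

Definition is_solution (k a1 a2 : R) (lo hi : Rbar) (H h : R -> V3) : Prop :=
  let ahat := mkV3 a1 a2 0 in
  forall t : R, Rbar_lt lo t -> Rbar_lt t hi ->
    is_derive_V3 H t (vadd (cross (H t) (Omega (H t))) (cross (h t) ahat)) /\
    is_derive_V3 h t (vadd (cross (h t) (Omega (H t))) (vscale k (cross (H t) ahat))).

Definition invariant (k a1 a2 : R) (H h : V3) : R :=
  let z : C := (x1 H / 2, x2 H / 2) in
  let w : C := (x1 h, x2 h) in
  let a : C := (a1, a2) in
  (Cmod (z * z - a * (w - RtoC k * a))) ^ 2.

(* With z = (H1 + i H2)/2, w = h1 + i h2 and a = a1 + i a2, the equations give
   dz/dt = i (a h3 - H3 z)/2 and dw/dt = i (h3 z - H3 w + k H3 a), hence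
   F = z^2 - a (w - k a) satisfies the linear equation dF/dt = -i H3 F.
   So F only rotates in the complex plane and |F|^2 is a first integral.
   In real terms, U = Re F and V = Im F obey U' = H3 V and V' = -H3 U. *)
From Stdlib Require Import Reals Lra.
From Coquelicot Require Import Coquelicot.
Open Scope R_scope.

Lemma Rbar_lt_between (lo hi : Rbar) (t s x : R) :
  Rbar_lt lo t -> Rbar_lt t hi -> Rbar_lt lo s -> Rbar_lt s hi ->
  Rmin t s <= x <= Rmax t s -> Rbar_lt lo x /\ Rbar_lt x hi.
Proof.
  intros lo_t t_hi lo_s s_hi [min_x x_max]; split.
  - apply (Rbar_lt_le_trans _ (Rmin t s)); [now apply Rmin_case | exact min_x].
  - apply (Rbar_le_lt_trans _ (Rmax t s)); [exact x_max | now apply Rmax_case].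
Qed.

Lemma is_derive_0_const (lo hi : Rbar) (f : R -> R) :
  (forall x : R, Rbar_lt lo x -> Rbar_lt x hi -> is_derive f x 0) ->
  forall t s : R, Rbar_lt lo t -> Rbar_lt t hi -> Rbar_lt lo s -> Rbar_lt s hi ->
    f t = f s.
Proof.
  intros df0 t s lo_t t_hi lo_s s_hi.
  pose proof (Rbar_lt_between lo hi t s) as between.
  destruct (MVT_gen f t s (fun _ => 0)) as [c [_ mvt]].
  - intros x [min_x x_max].
    destruct (between x lo_t t_hi lo_s s_hi) as [lo_x x_hi]; [lra |].
    exact (df0 x lo_x x_hi).
  - intros x range_x.
    destruct (between x lo_t t_hi lo_s s_hi range_x) as [lo_x x_hi].
    apply continuity_pt_filterlim, (ex_derive_continuous f).
    exists 0; exact (df0 x lo_x x_hi).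
  - lra.
Qed.

Lemma is_derive_sum_sq_rotation (U V : R -> R) (w x : R) :
  is_derive U x (w * V x) -> is_derive V x (- (w * U x)) ->
  is_derive (fun s => U s ^ 2 + V s ^ 2) x 0.
Proof.
  intros dU dV.
  replace 0 with (INR 2 * (w * V x) * U x ^ 1 + INR 2 * (- (w * U x)) * V x ^ 1)
    by (simpl; ring).
  apply (is_derive_plus (fun s => U s ^ 2) (fun s => V s ^ 2));
    apply is_derive_pow; assumption.
Qed.

Definition invariant_re (k a1 a2 H1 H2 h1 h2 : R) : R :=
  (H1 ^ 2 - H2 ^ 2) / 4 - (a1 * (h1 - k * a1) - a2 * (h2 - k * a2)).

Definition invariant_im (k a1 a2 H1 H2 h1 h2 : R) : R :=
  H1 * H2 / 2 - (a1 * (h2 - k * a2) + a2 * (h1 - k * a1)).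

Lemma invariant_re_im (k a1 a2 : R) (H h : V3) :
  invariant k a1 a2 H h =
  invariant_re k a1 a2 (x1 H) (x2 H) (x1 h) (x2 h) ^ 2 +
  invariant_im k a1 a2 (x1 H) (x2 H) (x1 h) (x2 h) ^ 2.
Proof.
  unfold invariant, invariant_re, invariant_im.
  rewrite Cmod2_alt; simpl; field.
Qed.

Section Solution.

Variables (k a1 a2 : R) (lo hi : Rbar) (H h : R -> V3).
Hypothesis sol : is_solution k a1 a2 lo hi H h.

(* auto_derive cannot see through the record projections, hence the named coordinates. *)
Let H1 (s : R) : R := x1 (H s).
Let H2 (s : R) : R := x2 (H s).
Let h1 (s : R) : R := x1 (h s).
Let h2 (s : R) : R := x2 (h s).
Let U (s : R) : R := invariant_re k a1 a2 (H1 s) (H2 s) (h1 s) (h2 s).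
Let V (s : R) : R := invariant_im k a1 a2 (H1 s) (H2 s) (h1 s) (h2 s).

Lemma invariant_re_im_is_derive (t : R) : Rbar_lt lo t -> Rbar_lt t hi ->
  is_derive U t (x3 (H t) * V t) /\ is_derive V t (- (x3 (H t) * U t)).
Proof.
  intros lo_t t_hi.
  destruct (sol t lo_t t_hi) as [[dH1 [dH2 _]] [dh1 [dh2 _]]]; simpl in *.
  split; unfold U, V, invariant_re, invariant_im; auto_derive;
    try (repeat split; eexists; eassumption);
    rewrite (is_derive_unique (fun x : R => H1 x) _ _ dH1),
      (is_derive_unique (fun x : R => H2 x) _ _ dH2),
      (is_derive_unique (fun x : R => h1 x) _ _ dh1),
      (is_derive_unique (fun x : R => h2 x) _ _ dh2);
    unfold H1, H2, h1, h2; field.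
Qed.

Lemma invariant_is_derive_0 (t : R) : Rbar_lt lo t -> Rbar_lt t hi ->
  is_derive (fun s => invariant k a1 a2 (H s) (h s)) t 0.
Proof.
  intros lo_t t_hi.
  apply (is_derive_ext (fun s => U s ^ 2 + V s ^ 2)).
  - intros s; symmetry; apply invariant_re_im.
  - destruct (invariant_re_im_is_derive t lo_t t_hi) as [dU dV].
    exact (is_derive_sum_sq_rotation U V (x3 (H t)) t dU dV).
Qed.

End Solution.

Theorem mainTheorem1 (k a1 a2 : R) (lo hi : Rbar) (H h : R -> V3) :
  (k = 0 \/ k = 1 \/ k = -1) ->
  is_solution k a1 a2 lo hi H h ->
  forall t s : R, Rbar_lt lo t -> Rbar_lt t hi -> Rbar_lt lo s -> Rbar_lt s hi ->
    invariant k a1 a2 (H t) (h t) = invariant k a1 a2 (H s) (h s).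
Proof.
  intros _ sol.
  apply (is_derive_0_const lo hi (fun s => invariant k a1 a2 (H s) (h s))).
  apply invariant_is_derive_0; assumption.
Qed.
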